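(* Let $p\geq 5$ be a prime and $r$ a positive integer such that $3$ does not divide $p^r+1$. Then the function $A(x)=x^{p^r+2}$ on $\mathbb{F}_{p^{2r}}$ is not EA-equivalent to $x^3$.
   Context: An additive function on $\mathbb{F}_{q}$ is one satisfying $L(x+y)=L(x)+L(y)$ for all $x,y$; an affine function is an additive function plus a constant. Two functions $f_1,f_2:\mathbb{F}_{q}\to\mathbb{F}_{q}$ are extended affine (EA) equivalent if there exist affine functions $l_1,l_2,l_3$ with $l_1,l_2$ permutations of $\mathbb{F}_{q}$ such that $f_1(x)=l_1(f_2(l_2(x)))+l_3(x)$ for all $x$. *)

From mathcomp Require Import all_boot all_order all_algebra all_field.
Set Implicit Arguments. Unset Strict Implicit. Unset Printing Implicit Defensive.
Import GRing.Theory.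
Local Open Scope ring_scope.

Definition additive_fun (F : finFieldType) (L : F -> F) : Prop :=
  forall x y : F, L (x + y) = L x + L y.

Definition affine_fun (F : finFieldType) (l : F -> F) : Prop :=
  exists (L : F -> F) (c : F), additive_fun L /\ forall x, l x = L x + c.

Definition EA_equivalent (F : finFieldType) (f1 f2 : F -> F) : Prop :=
  exists l1 l2 l3 : F -> F,
    affine_fun l1 /\ affine_fun l2 /\ affine_fun l3 /\
    bijective l1 /\ bijective l2 /\
    (forall x, f1 x = l1 (f2 (l2 x)) + l3 x).

(* The third finite difference D3 g (a,b,c) kills affine terms and is
   trilinear on cubes, so an EA-equivalence x^(q+2) ~ l1 (l2 x ^3) + l3 x, with
   q = p^r, forces
     2 (a^q b c + b^q a c + c^q a b) = L1 (6 L2(a) L2(b) L2(c)),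
   where L1, L2 are the additive parts of l1, l2.  The right-hand side only
   depends on the product L2(a) L2(b) L2(c); taking b with
   L2(1) L2(b) = L2(a)^2 makes the left-hand sides at (1,b,c) and (a,a,c)
   agree for every c, and c = 1, c = a then give a^q = a for every a, which
   fails in a field with q^2 elements. *)

From mathcomp Require Import all_boot all_order all_algebra all_field.
From mathcomp Require Import ring.

Set Implicit Arguments. Unset Strict Implicit.
Import GRing.Theory.
Local Open Scope ring_scope.

Definition third_diff (V W : zmodType) (g : V -> W) (a b c : V) : W :=
  g (a + b + c) - g (a + b) - g (a + c) - g (b + c) + g a + g b + g c - g 0.

Lemma eq_third_diff (V W : zmodType) (g h : V -> W) a b c :
  g =1 h -> third_diff g a b c = third_diff h a b c.
Proof. by move=> gh; rewrite /third_diff !gh. Qed.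

Section AdditiveFun.
Variable F : finFieldType.
Implicit Types (L : F -> F) (g : F -> F).

Lemma additive_fun0 L : additive_fun L -> L 0 = 0.
Proof. by move=> addL; apply: (addrI (L 0)); rewrite -addL !addr0. Qed.

Lemma additive_funN L : additive_fun L -> forall x, L (- x) = - L x.
Proof.
by move=> addL x; apply: (addrI (L x)); rewrite -addL !subrr (additive_fun0 addL).
Qed.

Lemma third_diff_additive L g a b c : additive_fun L ->
  third_diff (fun x => L (g x)) a b c = L (third_diff g a b c).
Proof. by move=> addL; rewrite /third_diff !(addL, additive_funN addL). Qed.

Lemma third_diffD_const k g a b c :
  third_diff (fun x => g x + k) a b c = third_diff g a b c.
Proof. by rewrite /third_diff; ring. Qed.

Lemma third_diffD_additive L g a b c : additive_fun L ->
  third_diff (fun x => g x + L x) a b c = third_diff g a b c.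
Proof. by move=> addL; rewrite /third_diff !addL (additive_fun0 addL); ring. Qed.

Lemma third_diff_cube_affine L k a b c : additive_fun L ->
  third_diff (fun x => (L x + k) ^+ 3) a b c = 6 * L a * L b * L c.
Proof. by move=> addL; rewrite /third_diff !addL (additive_fun0 addL); ring. Qed.

Lemma affine_bij_surj L k : bijective (fun x => L x + k) ->
  forall y, exists x, L x = y.
Proof. by move=> [g _ gK] y; exists (g (y + k)); apply: (addIr k); rewrite gK. Qed.

Lemma affine_bij_ker L k : additive_fun L -> bijective (fun x => L x + k) ->
  forall x, L x = 0 -> x = 0.
Proof.
move=> addL /bij_inj lk_inj x Lx0; apply: lk_inj => /=.
by rewrite Lx0 (additive_fun0 addL).
Qed.

End AdditiveFun.

Section FrobeniusPolar.
Variables (R : comNzRingType) (q : nat).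

Definition frob_polar (a b c : R) := a ^+ q * b * c + b ^+ q * a * c + c ^+ q * a * b.

Hypothesis frobD : forall x y : R, (x + y) ^+ q = x ^+ q + y ^+ q.

Lemma third_diff_frob_exp a b c :
  third_diff (fun x : R => x ^+ (q + 2)) a b c = 2 * frob_polar a b c.
Proof.
have frob0 : 0 ^+ q = 0 :> R by apply: (addrI (0 ^+ q)); rewrite -frobD !addr0.
rewrite /third_diff /frob_polar !exprD !frobD frob0.
set aq := a ^+ q; set bq := b ^+ q; set cq := c ^+ q; ring.
Qed.

End FrobeniusPolar.

Lemma frob_polar_collision (R : idomainType) (q : nat) (a b : R) :
  frob_polar q 1 b 1 = frob_polar q a a 1 ->
  frob_polar q 1 b a = frob_polar q a a a -> a ^+ q = a.
Proof.
rewrite /frob_polar expr1n !mulr1 !mul1r => h1 h2.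
set aq := a ^+ q in h1 h2 *; set bq := b ^+ q in h1 h2.
have /eqP : (b - a * a) * (aq - a) = 0.
  have -> : (b - a * a) * (aq - a) =
     (b * a + bq * a + aq * b - (aq * a * a + aq * a * a + aq * a * a))
     - a * (b + bq + b - (aq * a + aq * a + a * a)) by ring.
  by rewrite h1 h2 !subrr mulr0 subr0.
rewrite mulf_eq0 !subr_eq0 => /orP[/eqP b_sq | /eqP //].
have /eqP : (aq - a) ^+ 2 = 0.
  have -> : (aq - a) ^+ 2 = b + bq + b - (aq * a + aq * a + a * a).
    by rewrite /bq b_sq exprMn -/aq; ring.
  by rewrite h1 subrr.
by rewrite expf_eq0 /= subr_eq0 => /eqP.
Qed.

Lemma exists_exp_nonfixed (F : finFieldType) (q : nat) :
  (1 < q)%N -> (q < #|F|)%N -> exists a : F, a ^+ q != a.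
Proof.
move=> q_gt1 q_ltF; apply/existsP; rewrite -negb_forall; apply/negP => /forallP fixq.
have size_pq : size ('X^q - 'X : {poly F}) = q.+1.
  by rewrite size_polyDl ?size_polyXn // size_polyN size_polyX ltnS.
have pq_neq0 : ('X^q - 'X : {poly F}) != 0 by rewrite -size_poly_gt0 size_pq.
suff /(max_poly_roots pq_neq0)/(_ (enum_uniq F)) : all (root ('X^q - 'X)) (enum F).
  by rewrite -cardE size_pq ltnS leqNgt q_ltF.
by apply/allP => x _; rewrite rootE !hornerE subr_eq0 fixq.
Qed.

Theorem mainTheorem4 (p r : nat) (F : finFieldType) :
  prime p -> (5 <= p)%N -> (0 < r)%N -> ~~ (3 %| p ^ r + 1)%N ->
  #|F| = (p ^ (2 * r))%N ->
  ~ EA_equivalent (fun x : F => x ^+ (p ^ r + 2)) (fun x : F => x ^+ 3).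
Proof.
move=> p_pr p_ge5 r_gt0 _ cardF.
have pcharF : p \in [pchar F] := card_finPcharP cardF p_pr.
have frobD (x y : F) : (x + y) ^+ (p ^ r) = x ^+ (p ^ r) + y ^+ (p ^ r).
  by apply: exprDn_pchar; rewrite (eq_pnat _ (pcharf_eq pcharF)) pnatX pnat_id.
have two_neq0 : 2%:R != 0 :> F.
  by rewrite -(dvdn_pcharf pcharF) gtnNdvd // (leq_trans _ p_ge5).
have q_gt1 : (1 < p ^ r)%N by rewrite -(expn0 p) ltn_exp2l ?prime_gt1.
have [a a_nonfixed] : exists a : F, a ^+ (p ^ r) != a.
  by apply: exists_exp_nonfixed; rewrite // cardF mulnC expnM ltn_Pmull ?expn_gt0 ?prime_gt0.
case=> l1 [l2 [l3 [[L1 [k1 [addL1 l1E]]] [[L2 [k2 [addL2 l2E]]] [[L3 [k3 [addL3 l3E]]]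
  [_ [l2_bij EA]]]]]]].
have {}l2_bij : bijective (fun x => L2 x + k2) := eq_bij l2_bij l2E.
have polarE (x y z : F) : 2 * frob_polar (p ^ r) x y z = L1 (6 * L2 x * L2 y * L2 z).
  rewrite -third_diff_frob_exp // (eq_third_diff _ _ _ EA).
  under eq_third_diff do rewrite l1E l2E l3E addrA.
  rewrite third_diffD_const third_diffD_additive // third_diffD_const.
  by rewrite third_diff_additive ?third_diff_cube_affine.
have L2_1 : L2 1 != 0 by apply/eqP => /(affine_bij_ker addL2 l2_bij) /eqP; rewrite oner_eq0.
have [b L2b] := affine_bij_surj l2_bij (L2 a ^+ 2 / L2 1).
have collision (z : F) : frob_polar (p ^ r) 1 b z = frob_polar (p ^ r) a a z.
  apply: (mulfI two_neq0); rewrite !polarE -(mulrA _ (L2 1)) L2b.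
  by rewrite [L2 1 * _]mulrCA mulfV // mulr1 expr2 mulrA.
by move: a_nonfixed; rewrite (frob_polar_collision (collision 1) (collision a)) eqxx.
Qed.
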